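(* Let $A_{n,m}=\langle\varphi,\psi,\tau\rangle$ be the subgroup of $\operatorname{Aut}(Y_{n,m})$ generated by the maps $\varphi,\psi,\tau$ defined below. Then: (1) $A_{1,0}\cong\{1\}$ and $A_{2,0}\cong A_{1,1}\cong C_2$; (2) $A_{n,0}\cong D_n$ for all $n>2$; (3) $A_{1,m}\cong C_2\times C_2$ for all $m>1$; (4) if $n>1$ and $m>0$, then (a) if at least one of $n,m$ is odd, $A_{n,m}\cong D_{2n}$; (b) otherwise ($n$ and $m$ both even), $A_{n,m}\cong D_n\times C_2$.
   Context: For integers $n\ge1$, $m\ge0$, the Yoke graph $Y_{n,m}$ has vertices the tuples $v=(v_0,\dots,v_{m+1})$ with $v_0,v_{m+1}\in\mathbb{Z}_n$, $v_1,\dots,v_m\in\{0,1\}$, $\sum v_i\equiv0\pmod n$; $u\sim v$ iff there is $0\le i\le m$ with $u_j=v_j$ for $j\notin\{i,i+1\}$ and either ($u_i=v_i+1$, $u_{i+1}=v_{i+1}-1$) or ($u_i=v_i-1$, $u_{i+1}=v_{i+1}+1$), bucket entries computed mod $n$. Define maps on vertices (bucket entries mod $n$): $\varphi(v_0,v_1,\dots,v_m,v_{m+1})=(v_0+1,v_1,\dots,v_m,v_{m+1}-1)$; $\psi(v_0,\dots,v_{m+1})=(v_{m+1},v_m,\dots,v_1,v_0)$; $\tau(v_0,v_1,\dots,v_m,v_{m+1})=(-v_0,1-v_1,\dots,1-v_m,-(m+v_{m+1}))$. These are automorphisms of $Y_{n,m}$. $C_k$ is the cyclic group of order $k$, and $D_k$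 is the dihedral group of order $2k$, $D_k=\langle g,h\mid g^k=h^2=1,\ hgh=g^{-1}\rangle$. *)

From HB Require Import structures.
From mathcomp Require Import all_boot all_fingroup all_solvable zmodp.
From mathcomp Require Import zify.

Set Implicit Arguments.
Unset Strict Implicit.
Unset Printing Implicit Defensive.

(* (For n = 0 the type 'I_0 is empty, hence so is the vertex set; the       *)
(*  theorem only ever uses n >= 1.)                                         *)

Lemma ord_pos n (x : 'I_n) : 0 < n.
Proof. exact: leq_ltn_trans (leq0n x) (ltn_ord x). Qed.

Definition zadd n (x : 'I_n) (k : nat) : 'I_n :=
  Ordinal (ltn_pmod (x + k) (ord_pos x)).

Definition zopp n (x : 'I_n) : 'I_n :=
  Ordinal (ltn_pmod (n - x) (ord_pos x)).

Lemma zadd_inj n k : injective (fun x : 'I_n => zadd x k).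
Proof.
move=> x y /(congr1 val) /= /eqP; rewrite eqn_modDr => /eqP.
by rewrite !modn_small // => /val_inj.
Qed.

Lemma zopp_inj n : injective (@zopp n).
Proof.
move=> x y /(congr1 val) /= /eqP H; apply/val_inj => /=.
move: H; rewrite -(eqn_modDr (x + y)).
rewrite addnA subnK; last exact: ltnW.
rewrite (addnC x) addnA subnK; last exact: ltnW.
by rewrite eqn_modDl !modn_small // => /eqP ->.
Qed.

(* A tuple (v_0, v_1, ..., v_m, v_{m+1}) is encoded as ((v_0, t), v_{m+1})  *)
(* where t = [v_1; ...; v_m] is an m-tuple of bits (true = 1, false = 0).   *)

Definition yraw (n m : nat) := ('I_n * m.-tuple bool * 'I_n)%type.

Definition ysum n m (x : yraw n m) : nat := x.1.1 + count id x.1.2 + x.2.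

Definition yoke_vertex n m (x : yraw n m) : bool := ysum x %% n == 0.

Definition yvert (n m : nat) := {x : yraw n m | yoke_vertex x}.

(* phi(v_0, v_1..v_m, v_{m+1}) = (v_0 + 1, v_1..v_m, v_{m+1} - 1) *)
Definition phi_raw n m (x : yraw n m) : yraw n m :=
  (zadd x.1.1 1, x.1.2, zadd x.2 (n - 1)).

Definition psi_raw n m (x : yraw n m) : yraw n m :=
  (x.2, [tuple of rev x.1.2], x.1.1).

(* tau(v_0, v_1..v_m, v_{m+1}) = (-v_0, 1-v_1..1-v_m, -(m + v_{m+1})) *)
Definition tau_raw n m (x : yraw n m) : yraw n m :=
  (zopp x.1.1, map_tuple negb x.1.2, zopp (zadd x.2 m)).

Lemma modn3 n x y z : (x %% n + y + z %% n) %% n = (x + y + z) %% n.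
Proof. by rewrite modnDmr -!addnA modnDml. Qed.

Lemma phi_raw_ok n m (x : yraw n m) : yoke_vertex x -> yoke_vertex (phi_raw x).
Proof.
case: x => [[a t] b]; rewrite /yoke_vertex /ysum /= => /eqP H.
have n0 := ord_pos a.
apply/eqP; rewrite modn3.
have -> : a + 1 + count id t + (b + (n - 1)) = a + count id t + b + n by lia.
by rewrite modnDr.
Qed.

Lemma psi_raw_ok n m (x : yraw n m) : yoke_vertex x -> yoke_vertex (psi_raw x).
Proof.
case: x => [[a t] b]; rewrite /yoke_vertex /ysum /= count_rev => H.
by have -> : b + count id t + a = a + count id t + b by lia.
Qed.

Lemma tau_raw_ok n m (x : yraw n m) : yoke_vertex x -> yoke_vertex (tau_raw x).
Proof.
case: x => [[a t] b]; rewrite /yoke_vertex /ysum /= => /eqP H.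
have n0 := ord_pos a.
have Hc : count id (map negb t) = m - count id t.
  rewrite count_map -[X in X - _](size_tuple t) -(count_predC id t).
  by rewrite addKn; apply: eq_count.
rewrite Hc modn3.
have ha : a < n := ltn_ord a.
have hc : count id t <= m by rewrite -{2}(size_tuple t) count_size.
set r := (b + m) %% n.
have hr : r < n by rewrite ltn_pmod.
have hr2 : r <= b + m by rewrite leq_mod.
apply/eqP.
have E : (n - a + (m - count id t) + (n - r) + (a + count id t + b)) %% n = 0.
  have -> : n - a + (m - count id t) + (n - r) + (a + count id t + b)
            = n + (n + (b + m - r)) by lia.
  rewrite modnDl modnDl {1}(divn_eq (b + m) n) -/r addnK modnMl //.
by rewrite -modnDmr H addn0 in E.
Qed.

Lemma phi_raw_inj n m : injective (@phi_raw n m).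
Proof.
move=> [[a t] b] [[a' t'] b'] E.
have /zadd_inj -> : zadd a 1 = zadd a' 1 by exact: (congr1 (fun z => z.1.1) E).
have -> : t = t' by exact: (congr1 (fun z => z.1.2) E).
have /zadd_inj -> : zadd b (n - 1) = zadd b' (n - 1)
  by exact: (congr1 (fun z => z.2) E).
by [].
Qed.

Lemma psi_raw_inj n m : injective (@psi_raw n m).
Proof.
move=> [[a t] b] [[a' t'] b'] E.
have Eb : b = b' by exact: (congr1 (fun z => z.1.1) E).
have Ea : a = a' by exact: (congr1 (fun z => z.2) E).
have Et : rev t = rev t' by exact: (congr1 (fun z => val z.1.2) E).
have : t = t' by apply/val_inj; rewrite -[val t]revK Et revK.
by move=> ->; rewrite Ea Eb.
Qed.

Lemma tau_raw_inj n m : injective (@tau_raw n m).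
Proof.
move=> [[a t] b] [[a' t'] b'] E.
have /zopp_inj -> : zopp a = zopp a' by exact: (congr1 (fun z => z.1.1) E).
have /(inj_map (can_inj negbK)) Et : map negb t = map negb t'
  by exact: (congr1 (fun z => val z.1.2) E).
have /zopp_inj /zadd_inj -> : zopp (zadd b m) = zopp (zadd b' m)
  by exact: (congr1 (fun z => z.2) E).
by rewrite (val_inj Et).
Qed.

Definition ylift n m (f : yraw n m -> yraw n m)
  (fok : forall x, yoke_vertex x -> yoke_vertex (f x)) (v : yvert n m) :
  yvert n m := exist _ (f (val v)) (fok _ (valP v)).

Lemma ylift_inj n m f fok : injective f -> injective (@ylift n m f fok).
Proof. by move=> finj u v /(congr1 val) /= /finj /val_inj. Qed.

Definition phi n m : {perm yvert n m} :=
  perm (@ylift_inj n m _ (@phi_raw_ok n m) (@phi_raw_inj n m)).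
Definition psi n m : {perm yvert n m} :=
  perm (@ylift_inj n m _ (@psi_raw_ok n m) (@psi_raw_inj n m)).
Definition tau n m : {perm yvert n m} :=
  perm (@ylift_inj n m _ (@tau_raw_ok n m) (@tau_raw_inj n m)).

Definition A_yoke n m : {group {perm yvert n m}} :=
  <<[set phi n m; psi n m; tau n m]>>%G.

(* Paper's D_k (dihedral group of order 2k, presentation                    *)
(* <g, h | g^k = h^2 = 1, hgh = g^-1>) is MathComp's 'D_(2k), which is      *)
(* indexed by its order (Grp_dihedral, valid for k > 1).                    *)
(* C_2 is the cyclic group Zp 2 (the additive group of 'Z_2).               *)

(** psi and tau are involutions inverting phi, which has order n, and (psi tau)^2 = phi^m.
    Hence s_j = psi tau phi^j commutes with phi, is inverted by tau, and
    s_j^2 = phi^(m+2j), while A = <phi, tau, s_j>.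
    When n or m is odd, j can be chosen with m + 2j = 1 (mod n): then s_j is a square
    root of phi outside <phi>, so it has order 2n and A = <s_j, tau> is dihedral of
    order 4n.  When n and m are both even, m + 2j = 0 (mod n) makes s_j a central
    involution outside the dihedral group <phi, tau> of order 2n, so A is their direct
    product.  That s_j lies outside <phi, tau> is seen on the first coordinate: phi and
    tau move it independently of the other coordinates, s_j does not.  Similarly tau lies
    outside <phi> and <psi> when m > 0, as phi and psi preserve the number of ones among
    v_1, ..., v_m and tau does not.  For m = 0 we have psi = tau, and for n = 1 phi is
    trivial, which settles the remaining cases. *)
From mathcomp Require Import all_boot all_fingroup all_solvable zmodp ssralg.
From mathcomp Require Import ring zify.

Set Implicit Arguments.
Unset Strict Implicit.
Unset Printing Implicit Defensive.

Import GRing.Theory.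
Local Open Scope group_scope.

Section GroupFacts.

Variable gT : finGroupType.
Implicit Types s t z : gT.

Lemma invg_involution t : t ^+ 2 = 1 -> t^-1 = t.
Proof. by move=> t2; apply/eqP; rewrite eq_invg_mul -expg2 t2. Qed.

Lemma order_eq2 t : t ^+ 2 = 1 -> t != 1 -> #[t] = 2.
Proof. by move=> t2 nt1; apply/prime_nt_dvdP; rewrite ?order_eq1 ?order_dvdn ?t2. Qed.

Lemma cycle2_isog t : #[t] = 2 -> <[t]> \isog Zp 2.
Proof. by move=> <-; rewrite isog_sym Zp_isog. Qed.

Lemma gen_set1U (A : {set gT}) : <<1 |: A>> = <<A>>.
Proof.
apply/eqP; rewrite eqEsubset gen_subG subUset sub1set group1 subset_gen.
by rewrite genS ?subsetUr.
Qed.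

Lemma order_notin_cycle_sqr s : s \notin <[s ^+ 2]> -> #[s] = #[s ^+ 2].*2.
Proof.
move=> sN; have s_even : ~~ odd #[s].
  apply: contra sN => s_odd; suff /eqP <- : generator <[s]> (s ^+ 2) by exact: cycle_id.
  by rewrite generator_coprime coprimen2 s_odd.
have two_dvd : 2 %| #[s] by rewrite dvdn2.
by rewrite orderXgcd (gcdn_idPr two_dvd) -muln2 divnK.
Qed.

Lemma inverted_notin_cycle s t : s ^ t = s^-1 -> 2 < #[s] -> t \notin <[s]>.
Proof.
move=> st s_gt2; apply: contraTN s_gt2 => /cycleP[k tE].
have s_sqr : s ^+ 2 = 1.
  by rewrite expg2 -{1}(invgK s) -st tE conjgE (commuteX k (commute_refl s)) mulKg mulVg.
by rewrite -leqNgt dvdn_leq // order_dvdn s_sqr.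
Qed.

Lemma dihedral_isog s t :
  t ^+ 2 = 1 -> s ^ t = s^-1 -> 1 < #[s] -> t \notin <[s]> ->
  <<[set s; t]>> \isog 'D_(#[s].*2).
Proof.
move=> t2 st s_gt1 tNs; set G := <<[set s; t]>>.
have homG : G \homg 'D_(#[s].*2).
  rewrite Grp_dihedral //; apply/existsP; exists (s, t).
  by rewrite /= !xpair_eqE joing_idl joing_idr expg_order t2 st !eqxx.
have [sG tG] : s \in G /\ t \in G by split; apply: mem_gen; rewrite !inE eqxx ?orbT.
have ltsG : #[s] < #|G|.
  by apply/proper_card/properP; rewrite cycle_subG; split=> //; exists t.
have [k oG] : exists k, #|G| = (k * #[s])%N by apply/dvdnP; rewrite cardSg ?cycle_subG.
rewrite isogEcard homG card_dihedral //= oG -mul2n leq_pmul2r ?order_gt0 //.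
by move: ltsG; rewrite oG -[X in X < _]mul1n ltn_pmul2r ?order_gt0.
Qed.

Lemma dprod_cycle2_isog (rT : finGroupType) (H : {group gT}) (K : {group rT}) z :
  H \isog K -> z ^+ 2 = 1 -> z \notin H -> z \in 'C(H) ->
  H <*> <[z]> \isog setX K (Zp 2).
Proof.
move=> isoHK z2 zNH cHz.
have oz : #[z] = 2.
  by apply: order_eq2 z2 _; apply: contraNneq zNH => ->; apply: group1.
have trHZ : H :&: <[z]> = 1 by rewrite setIC prime_TIg -?orderE ?oz ?cycle_subG.
have defG : H \x <[z]> = H <*> <[z]> by rewrite dprodEY ?cycle_subG.
apply: isog_dprod defG (setX_dprod K (Zp 2)) _ _.
  by apply: isog_trans isoHK _; apply: isog_setX1.
by apply: isog_trans (cycle2_isog oz) _; apply: isog_set1X.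
Qed.

End GroupFacts.

Lemma exists_add_double_mod n m r : 0 < n -> odd n || (odd m == odd r) ->
  exists j, m + j.*2 = r %[mod n].
Proof.
move=> n_gt0 par; have mn : m <= n * m by exact: leq_pmull.
set d := r + n * m - m; have dE : m + d = r + n * m by rewrite /d; lia.
have [d_odd | d_even] := boolP (odd d).
  have n_odd : odd n.
    move: d_odd par; rewrite /d oddB ?oddD ?oddM; last by lia.
    by case: (odd n); case: (odd m); case: (odd r).
  exists (d + n)./2; rewrite halfK oddD d_odd n_odd subn0 addnA dE.
  by rewrite -addnA -mulnSr addnC mulnC modnMDl.
exists d./2; rewrite halfK (negbTE d_even) subn0 dE.
by rewrite addnC mulnC modnMDl.
Qed.

Section PermInvariants.

Variables (T : finType) (aT : eqType) (w : T -> aT).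

Definition invariant_perms : {set {perm T}} :=
  [set p : {perm T} | [forall x, w (p x) == w x]].

Lemma invariant_permsP (p : {perm T}) :
  reflect (forall x, w (p x) = w x) (p \in invariant_perms).
Proof. by rewrite inE; apply: (iffP forallP) => wp x; apply/eqP. Qed.

Lemma invariant_perms_group_set : group_set invariant_perms.
Proof.
apply/group_setP; split; first by apply/invariant_permsP => x; rewrite perm1.
move=> p q /invariant_permsP wp /invariant_permsP wq.
by apply/invariant_permsP => x; rewrite permM wq wp.
Qed.

Canonical invariant_perms_group := Group invariant_perms_group_set.

Definition fibre_perms : {set {perm T}} :=
  [set p : {perm T} | [forall x, forall y, (w x == w y) ==> (w (p x) == w (p y))]].

Lemma fibre_permsP (p : {perm T}) :
  reflect (forall x y, w x = w y -> w (p x) = w (p y)) (p \in fibre_perms).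
Proof.
rewrite inE; apply: (iffP forallP) => [wp x y /eqP | wp x].
  by move/implyP: (forallP (wp x) y) => /[apply] /eqP.
by apply/forallP => y; apply/implyP => /eqP /wp ->.
Qed.

Lemma fibre_perms_group_set : group_set fibre_perms.
Proof.
apply/group_setP; split; first by apply/fibre_permsP => x y; rewrite !perm1.
move=> p q /fibre_permsP wp /fibre_permsP wq.
by apply/fibre_permsP => x y /wp /wq; rewrite !permM.
Qed.

Canonical fibre_perms_group := Group fibre_perms_group_set.

End PermInvariants.

Definition yoke_relations (gT : finGroupType) (m : nat) (f p t : gT) :=
  [/\ t ^+ 2 = 1, p ^+ 2 = 1, f ^ t = f^-1, f ^ p = f^-1 & (p * t) ^+ 2 = f ^+ m].

Section YokeRelations.

Variables (gT : finGroupType) (m : nat) (f p t : gT).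
Hypothesis rel : yoke_relations m f p t.

Definition yoke_sigma j := p * t * f ^+ j.

Let tV : t^-1 = t. Proof. by case: rel => t2 *; apply: invg_involution. Qed.

Let pt_commute : commute (p * t) f.
Proof.
case: rel => _ p2 ft fp _; apply/commute_sym.
by rewrite /commute conjgC conjgM fp conjVg ft invgK.
Qed.

Let pt_conj : (p * t) ^ t = (p * t)^-1.
Proof.
case: rel => t2 p2 _ _ _.
by rewrite conjgE tV -mulgA -expg2 t2 mulg1 invMg tV invg_involution.
Qed.

Lemma commute_yoke_sigma j : commute f (yoke_sigma j).
Proof. exact/commuteM/commuteX/commute_refl/commute_sym. Qed.

Lemma yoke_sigma_sqr j : yoke_sigma j ^+ 2 = f ^+ (m + j.*2).
Proof.
case: rel => _ _ _ _ pt2.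
by rewrite expgMn; [rewrite pt2 -expgM expgD muln2 | exact: commuteX].
Qed.

Lemma yoke_sigma_conj j : yoke_sigma j ^ t = (yoke_sigma j)^-1.
Proof.
case: rel => _ _ ft _ _; rewrite /yoke_sigma conjMg pt_conj conjXg ft expgVn.
by rewrite (commuteX j pt_commute) [RHS]invMg.
Qed.

Lemma yoke_gen_sigma j : <<[set f; p; t]>> = <<[set f; t; yoke_sigma j]>>.
Proof.
have pE : p = yoke_sigma j * (f ^+ j)^-1 * t^-1 by rewrite !mulgK.
have sG : yoke_sigma j \in <<[set f; p; t]>>.
  by rewrite !groupM ?groupX // mem_gen // !inE eqxx ?orbT.
move: (yoke_sigma j) => s in pE sG *.
have pH : p \in <<[set f; t; s]>>.
  by rewrite pE !groupM ?groupV ?groupX // mem_gen // !inE eqxx ?orbT.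
apply/eqP; rewrite eqEsubset !gen_subG !subUset !sub1set sG pH.
by rewrite !mem_gen // !inE eqxx ?orbT.
Qed.

End YokeRelations.

Definition yhead n m (v : yvert n m) : 'I_n := (val v).1.1.
Definition yweight n m (v : yvert n m) : nat := count id (val v).1.2.

Lemma yoke_vertex_zero n m :
  yoke_vertex ((ord0 : 'I_n.+1), [tuple of nseq m false], (ord0 : 'I_n.+1)).
Proof. by rewrite /yoke_vertex /ysum /= count_nseq mul0n. Qed.

Lemma yoke_vertex_one n m :
  yoke_vertex ((ord0 : 'I_n.+1), [tuple of true :: nseq m false], (ord_max : 'I_n.+1)).
Proof. by rewrite /yoke_vertex /ysum /= count_nseq mul0n add1n modnn. Qed.

Definition yzero n m : yvert n.+1 m := exist (@yoke_vertex _ _) _ (yoke_vertex_zero n m).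
Definition yone n m : yvert n.+1 m.+1 := exist (@yoke_vertex _ _) _ (yoke_vertex_one n m).

Lemma phi_val n m (v : yvert n m) : val (phi n m v) = phi_raw (val v).
Proof. by rewrite permE. Qed.

Lemma psi_val n m (v : yvert n m) :
  val (psi n m v) = ((val v).2, [tuple of rev (val v).1.2], (val v).1.1).
Proof. by rewrite permE. Qed.

Lemma tau_val n m (v : yvert n m) : val (tau n m v) = tau_raw (val v).
Proof. by rewrite permE. Qed.

Lemma psi_sqr n m : psi n m ^+ 2 = 1.
Proof.
apply/permP => v; apply/val_inj; rewrite expg2 permM perm1 !psi_val /=.
by case: (val v) => [[a t] b] /=; congr (_, _, _); apply: val_inj; rewrite /= revK.
Qed.

Lemma phi_weight n m : phi n m \in invariant_perms (@yweight n m).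
Proof. by apply/invariant_permsP => v; rewrite /yweight phi_val. Qed.

Lemma psi_weight n m : psi n m \in invariant_perms (@yweight n m).
Proof. by apply/invariant_permsP => v; rewrite /yweight psi_val count_rev. Qed.

Lemma tau_weight n m : tau n.+1 m.+1 \notin invariant_perms (@yweight n.+1 m.+1).
Proof.
apply/negP => /invariant_permsP /(_ (yzero n m.+1)).
by rewrite /yweight tau_val /= count_map !count_nseq mul0n.
Qed.

Lemma phi_fibre n m : phi n m \in fibre_perms (@yhead n m).
Proof. by apply/fibre_permsP => v w; rewrite /yhead !phi_val /= => ->. Qed.

Lemma tau_fibre n m : tau n m \in fibre_perms (@yhead n m).
Proof. by apply/fibre_permsP => v w; rewrite /yhead !tau_val /= => ->. Qed.

Section RingCoordinates.

Variables n m : nat.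
Local Open Scope ring_scope.

Lemma zaddE (x : 'I_n.+2) k : zadd x k = x + k%:R.
Proof. by apply: val_inj; rewrite /= Zp_nat /= modnDmr. Qed.

Lemma zoppE (x : 'I_n.+2) : zopp x = - x.
Proof. by apply: val_inj. Qed.

Lemma phiX_val k (v : yvert n.+2 m) :
  val ((phi n.+2 m ^+ k)%g v) = ((val v).1.1 + k%:R, (val v).1.2, (val v).2 - k%:R).
Proof.
elim: k => [|k IHk]; first by rewrite expg0 perm1 !addr0 subr0; case: (val v) => [[]].
rewrite expgSr permM phi_val IHk /phi_raw /= !zaddE subSS subn0.
have -> : n.+1%:R = -1 :> 'I_n.+2 by apply: val_inj; rewrite /= Zp_nat /= !modn_small.
by rewrite -natr1; congr (_, _, _); ring.
Qed.

Lemma phi_val_ring (v : yvert n.+2 m) :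
  val (phi n.+2 m v) = ((val v).1.1 + 1, (val v).1.2, (val v).2 - 1).
Proof. by rewrite -[phi _ _]expg1 phiX_val. Qed.

Lemma tau_val_ring (v : yvert n.+2 m) :
  val (tau n.+2 m v) = (- (val v).1.1, map_tuple negb (val v).1.2, - ((val v).2 + m%:R)).
Proof. by rewrite tau_val /tau_raw !zoppE zaddE. Qed.

End RingCoordinates.

(* Relations are stated without [phi ^+ k] for a numeral [k], which [permM] would unfold. *)
Local Ltac yoke_perm_eq :=
  let v := fresh "v" in
  apply/permP => v; apply/val_inj;
  rewrite ?permM ?perm1; repeat rewrite (phiX_val, phi_val_ring, psi_val, tau_val_ring);
  case: (val v) => [[? ?] ?] /=; congr (_, _, _);
  try ring; try by apply: val_inj; rewrite /= ?map_rev ?revK ?(mapK negbK).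

Section YokeGenerators.

Variables n m : nat.
Local Notation f := (phi n.+2 m).
Local Notation p := (psi n.+2 m).
Local Notation t := (tau n.+2 m).

Lemma phi_expn : f ^+ n.+2 = 1.
Proof.
apply/permP => v; apply/val_inj; rewrite phiX_val perm1.
have -> : (n.+2%:R = 0 :> 'I_n.+2)%R by rewrite Zp_nat; apply: val_inj; rewrite /= modnn.
by rewrite addr0 subr0; case: (val v) => [[]].
Qed.

Lemma phi_order : #[f] = n.+2.
Proof.
apply/eqP; rewrite eqn_dvd order_dvdn phi_expn eqxx /=.
have := congr1 (fun q : {perm _} => val (yhead (q (yzero n.+1 m)))) (expg_order f).
by rewrite /yhead /= phiX_val perm1 Zp_nat /= add0n modn_mod => /eqP.
Qed.

Lemma tau_sqr : t ^+ 2 = 1.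
Proof. rewrite expg2; yoke_perm_eq. Qed.

Lemma yoke_relations_phi_psi_tau : yoke_relations m f p t.
Proof.
split; [exact: tau_sqr | exact: psi_sqr | | | by rewrite expg2; yoke_perm_eq].
  apply/eqP; rewrite eq_mulgV1 invgK conjgE (invg_involution tau_sqr); apply/eqP.
  yoke_perm_eq.
apply/eqP; rewrite eq_mulgV1 invgK conjgE (invg_involution (psi_sqr _ _)); apply/eqP.
yoke_perm_eq.
Qed.

Lemma yoke_sigma_fibre j : 0 < m -> yoke_sigma f p t j \notin fibre_perms (@yhead n.+2 m).
Proof.
case: m => // m' _; apply/negP => /fibre_permsP /(_ (yzero n.+1 m'.+1) (yone n.+1 m') erefl).
rewrite /yhead !permM !phiX_val !tau_val_ring !psi_val /=.
by move/addIr/oppr_inj/(congr1 val).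
Qed.

End YokeGenerators.

Lemma psi_eq_tau_0 n : psi n.+2 0 = tau n.+2 0.
Proof.
apply/permP => v; apply/val_inj; rewrite psi_val tau_val_ring.
case: v => [[[a t] b] /= vtx]; rewrite (tuple0 t) in vtx *.
have ab0 : (a + b = 0)%R.
  by apply: val_inj; move: vtx; rewrite /yoke_vertex /ysum /= addn0 => /eqP.
by rewrite addr0 -(addKr a b) ab0 addr0 opprK; congr (_, _, _); apply: val_inj.
Qed.

Lemma tau_2_0 : tau 2 0 = 1.
Proof.
apply/permP => v; apply/val_inj; rewrite tau_val_ring perm1 addr0.
have oppI2 (x : 'I_2) : (- x)%R = x by case: x => [[|[|]]] //= ?; apply: val_inj.
by case: (val v) => [[a t] b] /=; rewrite !oppI2 (tuple0 t); congr (_, _, _); apply: val_inj.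
Qed.

Section YokeOne.

Variable m : nat.

Lemma yvert1_perm_eq (p q : {perm yvert 1 m}) :
  (forall v, (val (p v)).1.2 = (val (q v)).1.2) -> p = q.
Proof.
move=> pq; apply/permP => v; apply/val_inj; move: (pq v).
case: (val (p v)) (val (q v)) => [[a t] b] [[a' t'] b'] /= ->.
by rewrite (ord1 a) (ord1 a') (ord1 b) (ord1 b').
Qed.

Lemma phi_1 : phi 1 m = 1.
Proof. by apply: yvert1_perm_eq => v; rewrite phi_val perm1. Qed.

Lemma tau_1_sqr : tau 1 m ^+ 2 = 1.
Proof.
apply: yvert1_perm_eq => v; rewrite expg2 permM !tau_val perm1 /=.
by apply: val_inj; rewrite /= (mapK negbK).
Qed.

Lemma commute_psi_tau_1 : commute (psi 1 m) (tau 1 m).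
Proof.
apply: yvert1_perm_eq => v; rewrite !permM tau_val psi_val tau_val psi_val /=.
by apply: val_inj; rewrite /= map_rev.
Qed.

End YokeOne.

Lemma psi_1_1 : psi 1 1 = 1.
Proof.
apply: yvert1_perm_eq => v; rewrite psi_val perm1; case: (val v) => [[_ t] _] /=.
by apply: val_inj; case: t => [[|x [|y s]]].
Qed.

Lemma psi_1_neq1 m : psi 1 m.+2 != 1.
Proof.
apply/eqP => /(congr1 (fun q : {perm _} => val (val (q (yone 0 m.+1))).1.2)).
by rewrite psi_val perm1 /= !rev_cons rev_nseq; case: m.
Qed.

Lemma A_yoke_1_0 : A_yoke 1 0 :=: 1.
Proof.
apply/trivgP/subsetP => q _; rewrite inE; apply/eqP/yvert1_perm_eq => v.
by rewrite [LHS]tuple0 [RHS]tuple0.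
Qed.

Lemma A_yoke_2_0 : A_yoke 2 0 \isog Zp 2.
Proof.
have -> : A_yoke 2 0 :=: <[phi 2 0]>.
  by rewrite /A_yoke /= psi_eq_tau_0 tau_2_0 -setUA setUid setUC gen_set1U.
exact: cycle2_isog (phi_order 0 0).
Qed.

Lemma A_yoke_1_1 : A_yoke 1 1 \isog Zp 2.
Proof.
have -> : A_yoke 1 1 :=: <[tau 1 1]>.
  by rewrite /A_yoke /= phi_1 psi_1_1 -setUA !gen_set1U.
apply/cycle2_isog/order_eq2; first exact: tau_1_sqr.
by apply: contraNneq (tau_weight 0 0) => ->; apply: group1.
Qed.

Lemma A_yoke_n_0 n : A_yoke n.+3 0 \isog 'D_((n.+3).*2).
Proof.
have [t2 _ ft _ _] := yoke_relations_phi_psi_tau n.+1 0.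
have -> : A_yoke n.+3 0 :=: <<[set phi n.+3 0; tau n.+3 0]>>.
  by rewrite /A_yoke /= psi_eq_tau_0 -setUA setUid.
have := dihedral_isog t2 ft; rewrite phi_order; apply=> //.
by apply: inverted_notin_cycle ft _; rewrite phi_order.
Qed.

Lemma A_yoke_1_m m : A_yoke 1 m.+2 \isog setX (Zp 2) (Zp 2).
Proof.
set p := psi 1 m.+2; set t := tau 1 m.+2.
have -> : A_yoke 1 m.+2 :=: <[p]> <*> <[t]>.
  by rewrite /A_yoke /= phi_1 -setUA gen_set1U joing_idl joing_idr.
apply: dprod_cycle2_isog (tau_1_sqr _) _ _.
- exact/cycle2_isog/order_eq2/psi_1_neq1/psi_sqr.
- apply: contra (tau_weight 0 m.+1); apply/subsetP.
  by rewrite cycle_subG psi_weight.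
- by rewrite cent_cycle; apply/cent1P/commute_sym/commute_psi_tau_1.
Qed.

Lemma A_yoke_odd n m :
  0 < m -> odd n.+2 || odd m -> A_yoke n.+2 m \isog 'D_((n.+2).*2.*2).
Proof.
move=> m_gt0 par; set f := phi n.+2 m; set t := tau n.+2 m.
have R := yoke_relations_phi_psi_tau n m; have [t2 _ _ _ _] := R.
have [j jE] : exists j, m + j.*2 = 1 %[mod n.+2].
  by apply: exists_add_double_mod; rewrite ?eqb_id.
set s := yoke_sigma f (psi n.+2 m) t j.
have s_sqr : s ^+ 2 = f.
  by rewrite (yoke_sigma_sqr R) -(expg_mod _ (phi_expn n m)) jE modn_small ?expg1.
have sNf : s \notin <[f]>.
  by apply: contra (yoke_sigma_fibre n j m_gt0); apply/subsetP; rewrite cycle_subG phi_fibre.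
have os : #[s] = (n.+2).*2.
  by have := order_notin_cycle_sqr (s := s); rewrite s_sqr phi_order; apply.
have -> : A_yoke n.+2 m :=: <<[set s; t]>>.
  rewrite /A_yoke /= (yoke_gen_sigma f (psi n.+2 m) t j) -/s -{1}s_sqr.
  apply/eqP; rewrite eqEsubset !gen_subG !subUset !sub1set.
  by rewrite ?groupX ?mem_gen // !inE eqxx ?orbT.
rewrite -os; apply: dihedral_isog (yoke_sigma_conj R j) _ _ => //; first by rewrite os.
by apply: inverted_notin_cycle (yoke_sigma_conj R j) _; rewrite os -addnn addnS.
Qed.

Lemma A_yoke_even n m :
  0 < m -> ~~ odd n.+2 -> ~~ odd m -> A_yoke n.+2 m \isog setX 'D_((n.+2).*2) (Zp 2).
Proof.
move=> m_gt0 n_even m_even; set f := phi n.+2 m; set t := tau n.+2 m.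
have R := yoke_relations_phi_psi_tau n m; have [t2 _ ft _ _] := R.
have [j jE] : exists j, m + j.*2 = 0 %[mod n.+2].
  by apply: exists_add_double_mod; rewrite // (negbTE n_even) (negbTE m_even).
set s := yoke_sigma f (psi n.+2 m) t j.
have s_sqr : s ^+ 2 = 1 by rewrite (yoke_sigma_sqr R) -(expg_mod _ (phi_expn n m)) jE.
set D := <<[set f; t]>>.
have -> : A_yoke n.+2 m :=: D <*> <[s]>.
  by rewrite /A_yoke /= (yoke_gen_sigma f (psi n.+2 m) t j) joing_idl joing_idr.
apply: (dprod_cycle2_isog _ s_sqr).
- have := dihedral_isog t2 ft; rewrite phi_order; apply=> //.
  apply: contra (tau_weight n.+1 m.-1); rewrite prednK //; apply/subsetP.
  by rewrite cycle_subG phi_weight.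
- apply: contra (yoke_sigma_fibre n j m_gt0); apply/subsetP.
  by rewrite gen_subG subUset !sub1set phi_fibre tau_fibre.
- rewrite -sub_cent1 gen_subG subUset !sub1set; apply/andP; split; apply/cent1P.
    exact: (commute_yoke_sigma R).
  apply/commute_sym; rewrite /commute conjgC (yoke_sigma_conj R).
  by rewrite (invg_involution s_sqr).
Qed.

Theorem theorem6p4 :
  (* (1) *)
  [/\ A_yoke 1 0 :=: 1%G,
      A_yoke 2 0 \isog Zp 2 &
      A_yoke 1 1 \isog Zp 2]
  (* (2) *)
  /\ (forall n : nat, 2 < n -> A_yoke n 0 \isog ('D_(n.*2))%g)
  (* (3) *)
  /\ (forall m : nat, 1 < m -> A_yoke 1 m \isog setX (Zp 2) (Zp 2))
  (* (4) *)
  /\ (forall n m : nat, 1 < n -> 0 < m ->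
        (odd n || odd m -> A_yoke n m \isog ('D_((n.*2).*2))%g)
        /\ (~~ odd n && ~~ odd m -> A_yoke n m \isog setX ('D_(n.*2))%g (Zp 2))).
Proof.
split; first by split; [exact: A_yoke_1_0 | exact: A_yoke_2_0 | exact: A_yoke_1_1].
split; first by case=> [|[|[|n]]] // _; exact: A_yoke_n_0.
split; first by case=> [|[|m]] // _; exact: A_yoke_1_m.
case=> [|[|n]] // m _ m_gt0; split; first exact: A_yoke_odd.
by case/andP; exact: A_yoke_even.
Qed.
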